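(* In the transactional panorama model described in the context, if every read transaction is answered so as to maintain consistency-committed ($C_c$), i.e., each read transaction returns the states of its views from the most recently committed version of the view graph, then the resulting sequence of read transactions also maintains monotonicity and visibility.
   Context: A view graph is a directed acyclic graph on a fixed set $N$ of nodes (source data and views); there is an edge $n_j \to n_i$ if view $n_i$ takes $n_j$ as input, and the dependents of a node are the nodes reachable from it. The view graph is multi-versioned. Write transactions $w^{t_1},\dots,w^{t_n}$ (timestamps $t_1<\dots<t_n$, starting from an initial version $G^{t_0}$) each modify some source nodes and must recompute their dependents; they are processed one at a time in timestamp order. Write transaction $w^{t_i}$ creates version $G^{t_i}=(E,N,V^{t_i})$, where for each node $n_k$ the set $V^{t_i}$ contains: the result $v_k^{t_i}$ if $w^{t_i}$ updates $n_k$ and has already computed it; a placeholder $UC_k^{t_i}$ (''under computation'') if $w^{t_i}$ updates $n_k$ but has not yet computed it; or the result of $n_k$ from the previous version if $w^{t_i}$ does not update $n_k$. A version is committed once all its new results have been computed (and its commit is recorded); the most recently committed version contains no UCs. The timestamp of a returned state is the timestamp of the version it belongs to. Read transactions $r^{s_1},\dots,r^{s_m}$ ($s_1<\dots<s_m$) each read the set of views in the user's current viewport (a subset of $N$, which may change between reads) and return immediately, without waiting, a set $H^{s_i}$ containing one state (a view result or a UC) per view read. Monotonicity: for any view $n_k$ read by two transactions $r^{s_i}, r^{s_j}$ with $s_i<s_j$, returning states with timestamps $t_p$ and $t_q$, we have $t_p \le t_q$. Visibility: no $H^{s_i}$ contains a UC. Consistency: for each $r^{s_i}$ there is a version $G^{t_j}=(E,N,V^{t_j})$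 with $t_j\le s_i$ and $H^{s_i}\subseteq V^{t_j}$. *)

From mathcomp Require Import all_boot.
Set Implicit Arguments. Unset Strict Implicit. Unset Printing Implicit Defensive.

(* A state of a node in some version: either a computed result, or a
   placeholder UC ("under computation").  Each state carries the timestamp
   of the version it belongs to (the version whose write produced it). *)
Inductive state (Val : Type) : Type :=
  | Res of nat & Val
  | UC of nat.

Definition state_ts (Val : Type) (x : state Val) : nat :=
  match x with Res t _ => t | UC t => t end.

Definition is_UC (Val : Type) (x : state Val) : bool :=
  if x is UC _ then true else false.

Definition acyclic (N : finType) (E : rel N) : Prop :=
  forall x y, E x y -> ~~ connect E y x.

(* Content of version i (timestamp t i) of node k, observed at time tau.
   Version i >= 1 is created by write w^{t_i}, which updates the nodes in
   upd i; node k in upd i has been computed by time tau iff comp i k <= tau,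
   in which case its value is val i k; nodes not updated carry the state of
   the previous version. *)
Fixpoint vstate (N : finType) (Val : Type) (t : nat -> nat) (init : N -> Val)
    (upd : nat -> {set N}) (comp : nat -> N -> nat) (val : nat -> N -> Val)
    (i tau : nat) (k : N) : state Val :=
  match i with
  | 0 => Res (t 0) (init k)
  | i'.+1 =>
      if k \in upd i then
        (if comp i k <= tau then Res (t i) (val i k) else UC Val (t i))
      else vstate t init upd comp val i' tau k
  end.

Definition last_committed (n : nat) (commit : nat -> nat) (tau : nat) : nat :=
  \max_(i < n.+1 | commit i <= tau) i.

From mathcomp Require Import all_boot.

(* Under C_c a read at time tau sees version [last_committed tau], a committed
   version, so none of its states is a UC.  The timestamp of the state of a
   node in version i is the stamp of the latest version <= i that updated the
   node, which is nondecreasing in i; as [last_committed] is nondecreasing in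
   tau, later reads see later stamps.  Neither argument uses the shape of the
   view graph. *)

Lemma homo_leq_interval (f : nat -> nat) (a b : nat) :
    (forall i, a <= i < b -> f i <= f i.+1) ->
  forall i j, a <= i -> i <= j -> j <= b -> f i <= f j.
Proof.
move=> f_step i j ai ij jb.
pose D := [pred k | a <= k <= b].
have convexD : {in D &, forall i j k, i < k < j -> k \in D}.
  move=> x y /andP[ax _] /andP[_ yb] z /andP[xz zy].
  by rewrite inE (leq_trans ax (ltnW xz)) (leq_trans (ltnW zy) yb).
have stepD : {in D, forall i, i.+1 \in D -> f i <= f i.+1}.
  by move=> k /andP[ak _] /andP[_ kb]; rewrite f_step // ak.
apply: (homo_leq_in leqnn (fun _ _ _ => @leq_trans _ _ _) convexD stepD) => //.
- by rewrite inE ai (leq_trans ij jb).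
- by rewrite inE (leq_trans ai ij) jb.
Qed.

Section Versions.

Context {N : finType} {Val : Type} {t : nat -> nat} {init : N -> Val}.
Context {upd : nat -> {set N}} {comp : nat -> N -> nat} {val : nat -> N -> Val}.
Context {n : nat} {commit : nat -> nat}.

Hypothesis t_le : forall i, i < n -> t i <= t i.+1.
Hypothesis commit_le : forall i, i < n -> commit i <= commit i.+1.
Hypothesis comp_le_commit :
  forall i k, 1 <= i <= n -> k \in upd i -> comp i k <= commit i.

Local Notation vst := (vstate t init upd comp val).

Lemma state_ts_vstate_tau i tau tau' k :
  state_ts (vst i tau k) = state_ts (vst i tau' k).
Proof.
elim: i => [|i IH] //=; case: (k \in upd i.+1) => //.
by case: (comp i.+1 k <= tau); case: (comp i.+1 k <= tau').
Qed.

Lemma state_ts_vstate_le i tau k : i <= n -> state_ts (vst i tau k) <= t i.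
Proof.
elim: i => [|i IH] //= lt_i_n; case: ifP => _; first by case: ifP.
exact: leq_trans (IH (ltnW lt_i_n)) (t_le _ lt_i_n).
Qed.

Lemma state_ts_vstateS i tau k :
  i < n -> state_ts (vst i tau k) <= state_ts (vst i.+1 tau k).
Proof.
move=> lt_i_n /=; case: ifP => _ //.
have ts_le := leq_trans (state_ts_vstate_le _ tau k (ltnW lt_i_n))
                        (t_le _ lt_i_n).
by case: ifP.
Qed.

Lemma state_ts_vstate_mono i i' tau k : i <= i' -> i' <= n ->
  state_ts (vst i tau k) <= state_ts (vst i' tau k).
Proof.
apply: (homo_leq_interval (fun i => state_ts (vst i tau k)) 0 n) => //.
by move=> j /andP[_ lt_j_n]; apply: state_ts_vstateS.
Qed.

Lemma vstate_committed_not_UC i tau k :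
  i <= n -> commit i <= tau -> ~~ is_UC (vst i tau k).
Proof.
elim: i => [|i IH] //= lt_i_n commit_tau; case: ifP => k_upd.
  by rewrite (leq_trans (comp_le_commit _ _ _ k_upd) commit_tau).
exact: IH (ltnW lt_i_n) (leq_trans (commit_le _ lt_i_n) commit_tau).
Qed.

End Versions.

Lemma last_committed_le n commit tau : last_committed n commit tau <= n.
Proof. by apply/bigmax_leqP => i _; rewrite -ltnS. Qed.

Lemma commit_last_committed n commit tau :
  commit 0 <= tau -> commit (last_committed n commit tau) <= tau.
Proof.
move=> commit0_tau; rewrite /last_committed.
by elim/big_ind: _ => // x y; rewrite /maxn; case: ifP.
Qed.

Lemma last_committed_mono n commit :
  {homo last_committed n commit : tau tau' / tau <= tau'}.
Proof.
move=> tau tau' le_tau; apply/bigmax_leqP => i commit_i.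
exact: leq_bigmax_cond (leq_trans commit_i le_tau).
Qed.

Theorem theorem2p4
  (N : finType) (E : rel N) (Val : Type)
  (* write side: versions 0..n *)
  (n : nat) (t : nat -> nat) (init : N -> Val)
  (upd : nat -> {set N}) (comp : nat -> N -> nat) (val : nat -> N -> Val)
  (commit : nat -> nat)
  (* read side: read transactions 1..m *)
  (m : nat) (s : nat -> nat) (vp : nat -> {set N})
  (H : nat -> N -> state Val)
  (* the view graph is a DAG *)
  (hE : acyclic E)
  (* write timestamps strictly increasing *)
  (ht : forall i, i < n -> t i < t i.+1)
  (* each write updates a set of nodes closed under dependents *)
  (hupd : forall i x y, 1 <= i <= n -> x \in upd i -> E x y -> y \in upd i)
  (* the initial version is committed at t_0 *)
  (hc0 : commit 0 = t 0)
  (* writes processed one at a time in timestamp order *)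
  (hcmono : forall i, 1 <= i <= n -> commit i.-1 < commit i)
  (* a version is created at its timestamp, and committed only once all its
     new results have been computed *)
  (hcomp : forall i k, 1 <= i <= n -> k \in upd i ->
             t i <= comp i k /\ comp i k <= commit i)
  (* read timestamps strictly increasing, all reads after t_0 *)
  (hs : forall j, 1 <= j < m -> s j < s j.+1)
  (hs1 : t 0 <= s 1)
  (* C_c: each read returns the states of its views from the most recently
     committed version at its timestamp *)
  (hCc : forall j k, 1 <= j <= m -> k \in vp j ->
           H j k = vstate t init upd comp val
                     (last_committed n commit (s j)) (s j) k) :
  (* monotonicity *)
  (forall j1 j2 k, 1 <= j1 <= m -> 1 <= j2 <= m -> s j1 < s j2 ->
     k \in vp j1 -> k \in vp j2 ->
     state_ts (H j1 k) <= state_ts (H j2 k))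
  /\
  (* visibility *)
  (forall j k, 1 <= j <= m -> k \in vp j -> ~~ is_UC (H j k)).
Proof.
have t_le i : i < n -> t i <= t i.+1 by move/ht/ltnW.
have commit_le i : i < n -> commit i <= commit i.+1 by move/(hcmono i.+1)/ltnW.
have comp_le_commit i k : 1 <= i <= n -> k \in upd i -> comp i k <= commit i.
  by move=> i_n /(hcomp _ _ i_n)[].
have commit0_s j : 1 <= j <= m -> commit 0 <= s j.
  move=> /andP[j1 jm]; rewrite hc0 (leq_trans hs1) //.
  by apply: (homo_leq_interval s 1 m) => // i /hs/ltnW.
split=> [j1 j2 k j1m j2m lt_s k1 k2 | j k jm kj].
- rewrite (hCc _ _ j1m k1) (hCc _ _ j2m k2).
  rewrite (state_ts_vstate_tau _ (s j1) (s j2)).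
  apply: (state_ts_vstate_mono t_le); last exact: last_committed_le.
  exact: last_committed_mono (ltnW lt_s).
- rewrite (hCc _ _ jm kj).
  apply: (vstate_committed_not_UC commit_le comp_le_commit).
    exact: last_committed_le.
  exact: commit_last_committed (commit0_s _ jm).
Qed.
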